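(* Let $G$ be a finite group, $H\leq G$ a subgroup of index $n$, and $T=\{t_1,\ldots,t_n\}$ a right transversal to $H$ in $G$ with $t_1=1$. For $g\in G$ write $g=\mathsf{H}(g)\mathsf{T}(g)$ with $\mathsf{H}(g)\in H$ and $\mathsf{T}(g)\in T$ (uniquely determined). Let $\chi$ be a linear character of $H$, let $\chi^+$ be its extension to $G$ by $0$ outside $H$, and let $\rho$ be the representation $\rho(g)=[\chi^+(t_igt_k^{-1})]_{i,k}$ of $G$. Put $\chi_{\mathsf{H}}(g)=\chi(\mathsf{H}(g))$ for $g\in G$. Let $M$ be an $n\times n$ complex matrix whose rows and columns are labelled by $T$ (in the order $t_1,\ldots,t_n$), and write $m(s,t)$ for the entry in row $s$ and column $t$. Then $M$ lies in the centraliser algebra $\mathrm{C}(\rho)=\{X\in M_n(\mathbb{C}) : X\rho(g)=\rho(g)X \text{ for all } g\in G\}$ if and only if for all $g\in G$ and $t\in T$, \[ m(\mathsf{T}(g),\mathsf{T}(tg)) = m(1,t)\,\chi_{\mathsf{H}}(g)^{-1}\,\chi_{\mathsf{H}}(tg).\]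
   Context: A right transversal $T$ to $H$ in $G$ is a set such that every $g\in G$ factorises uniquely as $g=ht$ with $h\in H$, $t\in T$. Here $1=t_1\in T$ is the identity element, labelling the coset $H$. *)

From HB Require Import structures.
From mathcomp Require Import all_boot all_order all_algebra all_fingroup all_solvable all_field all_character.
Set Implicit Arguments. Unset Strict Implicit. Unset Printing Implicit Defensive.
Import GRing.Theory Num.Theory.
Local Open Scope group_scope.

Definition Tpart (gT : finGroupType) (H T : {set gT}) (g : gT) : gT :=
  transversal_repr 1 T (H :* g).

Definition Hpart (gT : finGroupType) (H T : {set gT}) (g : gT) : gT :=
  g * (Tpart H T g)^-1.

(* rho(g) = [chi^+(t_i g t_k^-1)]_{i,k}; a class function in 'CF(H) already
   vanishes outside H, so it is its own extension chi^+ by 0. *)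
Definition rho_mx (gT : finGroupType) (H : {group gT}) (n : nat)
  (t : 'I_n -> gT) (chi : 'CF(H)) (g : gT) : 'M[algC]_n :=
  \matrix_(i, k) chi (t i * g * (t k)^-1).

From HB Require Import structures.
From mathcomp Require Import all_boot all_order all_algebra all_fingroup all_solvable all_field all_character.
Import GRing.Theory Num.Theory.
Local Open Scope ring_scope.

(* Because T is a right transversal, rho(g) is monomial: row i has a single
   nonzero entry, chi(H(t_i g)), in the column of T(t_i g).  Comparing the rows
   of t_1 = 1 in M rho(g) = rho(g) M gives the coefficient rule.  Conversely,
   the rule at g = t_i expresses row i of M through row 1, and the cocycle identity
   H(a g) = H(a) H(T(a) g), with multiplicativity of chi, turns the rule at
   t_i g into entry (i, T(t_k g)) of the commutation. *)

Set Implicit Arguments.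
Unset Strict Implicit.

Section RightTransversal.

Variables (gT : finGroupType) (G H : {group gT}) (X : {set gT}).
Hypothesis trX : is_transversal X (rcosets H G) G.

Local Open Scope group_scope.

Local Notation Tpart := (Tpart H X).
Local Notation Hpart := (Hpart H X).

Let memXG x : x \in X -> x \in G := subsetP (transversal_sub trX) x.

Lemma eq_Tpart g x : g \in G -> x \in X -> (x == Tpart g) = (g * x^-1 \in H).
Proof.
move=> Gg Xx; have HgG : H :* g \in rcosets H G by apply/rcosetsP; exists g.
rewrite -in_set1 /Tpart -(setI_transversal_pblock trX 1 HgG) inE Xx /=.
by rewrite mem_rcoset -groupV invMg invgK.
Qed.

Lemma Tpart_mem g : g \in G -> Tpart g \in X.
Proof. by move=> Gg; apply: (repr_mem_transversal trX); apply/rcosetsP; exists g. Qed.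

Lemma Hpart_mem g : g \in G -> Hpart g \in H.
Proof. by move=> Gg; rewrite -eq_Tpart ?Tpart_mem. Qed.

Lemma Tpart_id x : x \in X -> Tpart x = x.
Proof.
by move=> Xx; apply/esym/eqP; rewrite eq_Tpart ?memXG // mulgV group1.
Qed.

Lemma Hpart_id x : x \in X -> Hpart x = 1.
Proof. by move=> Xx; rewrite /Hpart Tpart_id ?mulgV. Qed.

Lemma TpartM a g : a \in G -> g \in G -> Tpart (a * g) = Tpart (Tpart a * g).
Proof.
move=> Ga Gg; have GTa := memXG (Tpart_mem Ga).
apply/esym/eqP; rewrite eq_Tpart ?Tpart_mem ?(groupM Ga Gg) ?(groupM GTa Gg) //.
have -> : (a * g * (Tpart (Tpart a * g))^-1 = Hpart a * Hpart (Tpart a * g)).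
  by rewrite /Hpart !mulgA mulgKV.
by rewrite groupM ?Hpart_mem ?groupM.
Qed.

Lemma HpartM a g : a \in G -> g \in G -> Hpart (a * g) = Hpart a * Hpart (Tpart a * g).
Proof. by move=> Ga Gg; rewrite /Hpart TpartM // !mulgA mulgKV. Qed.

Lemma Tpart_mulV x g : x \in X -> g \in G -> Tpart (Tpart (x * g^-1) * g) = x.
Proof.
by move=> Xx Gg; rewrite -TpartM ?groupM ?groupV ?(memXG Xx) // mulgKV Tpart_id.
Qed.

Lemma Tpart_mulr_inj x y g : x \in X -> y \in X -> g \in G ->
  Tpart (x * g) = Tpart (y * g) -> x = y.
Proof.
move=> Xx Xy Gg eqT; have [Gx Gy] := (memXG Xx, memXG Xy).
rewrite -(Tpart_id Xx); apply/esym/eqP; rewrite eq_Tpart //.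
have -> : (x * y^-1 = Hpart (x * g) * (Hpart (y * g))^-1).
  by rewrite /Hpart eqT !invMg invgK !mulgA mulgKV mulgK.
by rewrite groupM ?groupV ?Hpart_mem ?groupM.
Qed.

End RightTransversal.

Section MonomialRepresentation.

Variables (gT : finGroupType) (G H : {group gT}) (n : nat) (t : 'I_n.+1 -> gT).
Variable chi : 'CF(H).
Hypothesis t_inj : injective t.
Hypothesis trT : is_transversal (t @: setT) (rcosets H G) G.

Local Notation T := (t @: setT).
Local Notation Tpart := (Tpart H T).
Local Notation Hpart := (Hpart H T).
Local Notation rho := (rho_mx t chi).

Lemma mem_tT i : t i \in T. Proof. exact: imset_f. Qed.

Lemma t_memG i : t i \in G.
Proof. exact: subsetP (transversal_sub trT) _ (mem_tT i). Qed.

Lemma Tpart_index g : g \in G -> exists i, Tpart g = t i.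
Proof. by move/(Tpart_mem trT)/imsetP=> [i _ ->]; exists i. Qed.

Lemma Tpart_surj g l : g \in G -> exists k, t l = Tpart (t k * g)%g.
Proof.
move=> Gg; have [k def_k] := Tpart_index (groupM (t_memG l) (groupVr Gg)).
by exists k; rewrite -def_k (Tpart_mulV trT) ?mem_tT.
Qed.

Lemma rho_mxE g i k : g \in G ->
  rho g i k = if t k == Tpart (t i * g)%g then chi (Hpart (t i * g)%g) else 0.
Proof.
move=> Gg; rewrite mxE; case: eqP => [-> // | neq_k].
by apply: cfun0; rewrite -(eq_Tpart trT) ?groupM ?t_memG ?mem_tT //; apply/eqP.
Qed.

Lemma mulmx_rhoE (M : 'M[algC]_n.+1) g i k l : g \in G ->
  t l = Tpart (t k * g)%g -> (M *m rho g) i l = M i k * chi (Hpart (t k * g)%g).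
Proof.
move=> Gg def_l; rewrite mxE (bigD1 k) //= big1 ?addr0 => [|k' neq_k'].
  by rewrite rho_mxE // def_l eqxx.
rewrite rho_mxE // def_l; case: eqP => [eqT | _]; last by rewrite mulr0.
by case/eqP: neq_k'; apply/t_inj/esym/(Tpart_mulr_inj trT (mem_tT k) (mem_tT k') Gg).
Qed.

Lemma rho_mulmxE (M : 'M[algC]_n.+1) g i j l : g \in G ->
  t j = Tpart (t i * g)%g -> (rho g *m M) i l = chi (Hpart (t i * g)%g) * M j l.
Proof.
move=> Gg def_j; rewrite mxE (bigD1 j) //= big1 ?addr0 => [|j' neq_j'].
  by rewrite rho_mxE // def_j eqxx.
by rewrite rho_mxE // -def_j (inj_eq t_inj) (negPf neq_j') mul0r.
Qed.

Hypothesis t0 : t ord0 = 1%g.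
Hypothesis chi_lin : chi \is a linear_char.

Let chi_Hpart_neq0 g : g \in G -> chi (Hpart g) != 0.
Proof. by move=> Gg; rewrite (lin_char_neq0 chi_lin) ?(Hpart_mem trT). Qed.

Lemma centraliser_rho_coef (M : 'M[algC]_n.+1) g k i j : g \in G ->
  M *m rho g = rho g *m M -> t i = Tpart g -> t j = Tpart (t k * g)%g ->
  M i j = M ord0 k * (chi (Hpart g))^-1 * chi (Hpart (t k * g)%g).
Proof.
move=> Gg commM def_i def_j.
have def_i0 : t i = Tpart (t ord0 * g)%g by rewrite t0 mul1g.
move/matrixP/(_ ord0 j): commM.
rewrite (mulmx_rhoE M ord0 Gg def_j) (rho_mulmxE M j Gg def_i0) t0 mul1g => eq_0j.
by rewrite mulrAC eq_0j [_ * M i j]mulrC mulfK ?chi_Hpart_neq0.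
Qed.

Lemma coef_rule_centralises_rho (M : 'M[algC]_n.+1) :
  (forall g, g \in G -> forall k i j,
     t i = Tpart g -> t j = Tpart (t k * g)%g ->
     M i j = M ord0 k * (chi (Hpart g))^-1 * chi (Hpart (t k * g)%g)) ->
  forall g, g \in G -> M *m rho g = rho g *m M.
Proof.
move=> coef_rule g Gg; apply/matrixP=> i l.
have Gig : (t i * g)%g \in G by rewrite groupM ?t_memG.
have [k def_l] := Tpart_surj l Gg.
have [j def_j] := Tpart_index Gig.
have [k' def_k_k'] := Tpart_surj k (t_memG i).
have Gk'i : (t k' * t i)%g \in G by rewrite groupM ?t_memG.
have def_l' : t l = Tpart (t k' * (t i * g))%g.
  by rewrite def_l def_k_k' -(TpartM trT) ?mulgA.
have chiHpartM : chi (Hpart (t k' * (t i * g))%g)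
                 = chi (Hpart (t k' * t i)%g) * chi (Hpart (t k * g)%g).
  have Gkg : (t k * g)%g \in G by rewrite groupM ?t_memG.
  rewrite mulgA (HpartM trT) // -def_k_k' (lin_charM chi_lin) //.
    exact: (Hpart_mem trT Gk'i).
  exact: (Hpart_mem trT Gkg).
rewrite (mulmx_rhoE M i Gg def_l) (rho_mulmxE M l Gg (esym def_j)).
rewrite (coef_rule _ (t_memG i) k' i k (esym (Tpart_id trT (mem_tT i))) def_k_k').
rewrite (coef_rule _ Gig k' j l (esym def_j) def_l').
rewrite (Hpart_id trT (mem_tT i)) (lin_char1 chi_lin) invr1 mulr1.
by rewrite chiHpartM [M ord0 k' * _^-1]mulrC !mulrA mulfV ?mul1r // chi_Hpart_neq0.
Qed.

End MonomialRepresentation.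

Unset Implicit Arguments.

Theorem proposition3p2 (gT : finGroupType) (G H : {group gT}) (n : nat)
  (t : 'I_n.+1 -> gT) (chi : 'CF(H)) (M : 'M[algC]_n.+1) :
  H \subset G ->
  injective t ->
  is_transversal (t @: setT) (rcosets H G) G ->
  t ord0 = 1%g ->
  chi \is a linear_char ->
  (forall g, g \in G -> M *m rho_mx t chi g = rho_mx t chi g *m M)
  <->
  (forall g, g \in G -> forall k i j : 'I_n.+1,
     t i = Tpart H (t @: setT) g ->
     t j = Tpart H (t @: setT) (t k * g)%g ->
     M i j = (M ord0 k * (chi (Hpart H (t @: setT) g))^-1
              * chi (Hpart H (t @: setT) (t k * g)%g))%R).
Proof.
(* [H \subset G] is implied by [rcosets H G] partitioning [G]. *)
move=> _ t_inj trT t0 chi_lin; split=> [commM g Gg k i j def_i def_j | coef_rule].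
  exact: (centraliser_rho_coef t_inj trT t0 chi_lin Gg (commM g Gg) def_i def_j).
exact: (coef_rule_centralises_rho t_inj trT chi_lin coef_rule).
Qed.
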